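(* Let $n\ge3$, let the sites of an $n$-qubit chain be partitioned into nonempty consecutive intervals $L=\{1,\dots,a\}$, $C=\{a+1,\dots,a+k\}$, $R=\{a+k+1,\dots,n\}$, let $U$ be a Clifford unitary on the chain with symplectic matrix $W$, and suppose $W$ satisfies the left wall condition around $C$. If $G_{\mathrm{left}}\cap G_{\mathrm{right}}\neq\{0\}$, then there exist an operator $Q_C$ on the qubits of $C$ that is not proportional to the identity and a real number $\theta$ such that $Q=\mathbb{1}_L\otimes Q_C\otimes\mathbb{1}_R$ satisfies $UQU^\dagger=e^{i\theta}Q$ (a non-trivial local conserved, possibly phase-oscillating, quantity supported on $C$).
   Context: Pauli operators modulo phases are identified with $\mathbb{Z}_2^{2n}$ via $(p_1,q_1,\dots,p_n,q_n)\mapsto X^{p_1}Z^{q_1}\otimes\cdots\otimes X^{p_n}Z^{q_n}$; symplectic form $J=\bigoplus_{i=1}^n\begin{pmatrix}0&1\\1&0\end{pmatrix}$; a Clifford unitary $U$ induces $W\in\mathrm{Sp}(2n,\mathbb{Z}_2)$ (i.e. $WJW^T=J$) with $UP_bU^\dagger\propto P_{Wb}$. $V_S$ denotes vectors supported on the site set $S$, $\mathbb{Z}_2^{2n}=V_L\oplus V_C\oplus V_R$, vectors $(l,c,r)$, and $\pi_C$ the projection onto $V_C$. Left wall condition: for all $t\ge1$, $l\in V_L$: $W^t(l,0,0)\in V_L\oplus V_C\oplus\{0\}$. Internal subspaces: $G_{\mathrm{left}}=\pi_C\big(\mathrm{span}\{W^t(l,0,0):t\ge0,\ l\in V_L\}\big)$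 and $G_{\mathrm{right}}=\pi_C\big(\mathrm{span}\{W^t(0,0,r):t\ge0,\ r\in V_R\}\big)$. *)

From HB Require Import structures.
From mathcomp Require Import all_boot all_order all_algebra.
From mathcomp Require Import complex.
From mathcomp Require Import reals trigo.
Set Implicit Arguments. Unset Strict Implicit. Unset Printing Implicit Defensive.
Import Order.TTheory GRing.Theory Num.Theory.
Local Open Scope ring_scope.

Definition bstate (m : nat) := {ffun 'I_m -> bool}.
Definition op (R : rcfType) (m : nat) := bstate m -> bstate m -> R[i].

Definition op_mul (R : rcfType) m (A B : op R m) : op R m :=
  fun x y => \sum_(z : bstate m) A x z * B z y.
Definition op_adj (R : rcfType) m (A : op R m) : op R m :=
  fun x y => (A y x)^*.
Definition op_id (R : rcfType) m : op R m := fun x y => (x == y)%:R.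
Arguments op_id R m : clear implicits.
Definition op_scale (R : rcfType) m (c : R[i]) (A : op R m) : op R m :=
  fun x y => c * A x y.
Definition unitary (R : rcfType) m (U : op R m) : Prop :=
  op_mul U (op_adj U) = op_id R m /\ op_mul (op_adj U) U = op_id R m.

(* ---------- Z_2^{2n}: column vectors over F_2, coordinates (p_1,q_1,...,p_n,q_n) ---------- *)
Definition F2vec (n : nat) := 'cV['F_2]_(2 * n).
Definition F2mat (n : nat) := 'M['F_2]_(2 * n).

Lemma pidx_lt n (i : 'I_n) : (2 * i < 2 * n)%N.
Proof. by rewrite ltn_pmul2l. Qed.
Lemma qidx_lt n (i : 'I_n) : ((2 * i).+1 < 2 * n)%N.
Proof.
have hi := ltn_ord i. rewrite -addn1.
have -> : (2 * n = 2 * i + 2 * (n - i))%N by rewrite -mulnDr subnKC // ltnW.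
rewrite ltn_add2l; case: (n - i)%N (subn_gt0 i n) => [|m]; rewrite ?hi //.
by move=> _; rewrite mulnS.
Qed.
Definition pidx n (i : 'I_n) : 'I_(2 * n) := Ordinal (pidx_lt i).
Definition qidx n (i : 'I_n) : 'I_(2 * n) := Ordinal (qidx_lt i).

(* Pauli operator P_b = X^{p_1}Z^{q_1} (x) ... (x) X^{p_n}Z^{q_n};
   single-site matrix element <x| X^p Z^q |y> = [x = y xor p] (-1)^(q y). *)
Definition pauli (R : rcfType) n (b : F2vec n) : op R n :=
  fun x y => \prod_(i < n)
    ((x i == (y i (+) (b (pidx i) 0 != 0)))%:R *
     (-1) ^+ ((b (qidx i) 0 != 0) && y i)).

Arguments pauli R {n} b.

(* symplectic form J = direct sum of [[0,1],[1,0]] *)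
Definition symJ n : F2mat n :=
  \matrix_(i, j) ((i %/ 2 == j %/ 2)%N && (i != j))%:R.
Definition symplectic n (W : F2mat n) : Prop := W *m symJ n *m W^T = symJ n.

Definition induces (R : rcfType) n (U : op R n) (W : F2mat n) : Prop :=
  forall b : F2vec n, exists c : R[i],
    op_mul (op_mul U (pauli R b)) (op_adj U) = op_scale c (pauli R (W *m b)).
Definition clifford_with (R : rcfType) n (U : op R n) (W : F2mat n) : Prop :=
  unitary U /\ symplectic W /\ induces U W.

(* ---------- Sites (0-based): L = [0,a), C = [a,a+k), R = [a+k,n) ---------- *)
Definition siteL (a : nat) (s : nat) : bool := (s < a)%N.
Definition siteC (a k : nat) (s : nat) : bool := ((a <= s) && (s < a + k))%N.
Definition siteR (a k : nat) (s : nat) : bool := (a + k <= s)%N.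

Definition supported n (S : pred nat) (v : F2vec n) : Prop :=
  forall j : 'I_(2 * n), ~~ S (j %/ 2)%N -> v j 0 = 0.
Definition projC n (a k : nat) (v : F2vec n) : F2vec n :=
  \col_j (if siteC a k (j %/ 2)%N then v j 0 else 0).

Definition in_span n (P : F2vec n -> Prop) (x : F2vec n) : Prop :=
  exists s : seq ('F_2 * F2vec n),
    (forall p, p \in s -> P p.2) /\ x = \sum_(p <- s) p.1 *: p.2.

Definition left_wall n (a k : nat) (W : F2mat n) : Prop :=
  forall t : nat, (0 < t)%N -> forall l : F2vec n, supported (siteL a) l ->
    supported (fun s => siteL a s || siteC a k s) (W ^+ t *m l).

Definition G_left n (a k : nat) (W : F2mat n) (g : F2vec n) : Prop :=
  exists x, in_span (fun v => exists (t : nat) (l : F2vec n),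
                       supported (siteL a) l /\ v = W ^+ t *m l) x
            /\ g = projC a k x.
Definition G_right n (a k : nat) (W : F2mat n) (g : F2vec n) : Prop :=
  exists x, in_span (fun v => exists (t : nat) (r : F2vec n),
                       supported (siteR a k) r /\ v = W ^+ t *m r) x
            /\ g = projC a k x.

Definition csite (a k r : nat) (j : 'I_k) : 'I_(a + k + r) := lshift r (rshift a j).
Arguments csite : clear implicits.
Definition restrC (a k r : nat) (x : bstate (a + k + r)) : bstate k :=
  [ffun j => x (csite a k r j)].
Arguments csite : clear implicits.
Arguments restrC : clear implicits.
Definition embedC (R : rcfType) (a k r : nat) (QC : op R k) : op R (a + k + r) :=
  fun x y => QC (restrC a k r x) (restrC a k r y) *
             \prod_(s < a + k + r | ~~ siteC a k s) (x s == y s)%:R.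

Arguments embedC R a k r QC : clear implicits.
Definition expi (R : realType) (theta : R) : R[i] := Complex (cos theta) (sin theta).

From HB Require Import structures.
From mathcomp Require Import all_boot all_order all_algebra.
From mathcomp Require Import complex.
From mathcomp Require Import reals trigo.
From mathcomp Require boolp.
From mathcomp Require Import zify ring lra.
Import Order.TTheory GRing.Theory Num.Theory.
Local Open Scope ring_scope.
Set Implicit Arguments. Unset Strict Implicit. Unset Printing Implicit Defensive.

(* Over F_2 the symplectic matrix W has finite order, so every negative power of
   W is a positive one and the left wall condition controls all of them.  Hence a
   vector of G_right is ω-orthogonal to every W^t l with l in V_L, while a vector
   of G_left evolves inside V_L ⊕ V_C.  For g in both, the L-coordinates of W^t g
   are values ω(W^t g, e) = ω(g, W^-t e) with e in V_L, so they vanish and the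
   whole orbit g, W g, ..., W^(p-1) g lies in V_C.  Conjugation by U permutes the
   Pauli operators of this orbit up to unit phases c_t, so
   Q = Σ_t β_t P_(W^t g), with β_(t+1) = β_t c_t / λ and λ^p = Π_t c_t,
   satisfies U Q U† = λ Q and |λ| = 1.  Q lives on C, and it is not scalar since
   the orbit consists of distinct nonzero vectors: Q is orthogonal to the identity
   but not to P_g. *)

Lemma sum_kronecker (T : finType) (R : pzSemiRingType) (c : T) (F : T -> R) :
  \sum_(t : T) (t == c)%:R * F t = F c.
Proof.
rewrite (bigD1 c) //= eqxx mul1r big1 ?addr0 // => t /negbTE ->.
by rewrite mul0r.
Qed.

Lemma iter_mulmx (R : pzSemiRingType) m p (A : 'M[R]_m) (B : 'M[R]_(m, p)) t :
  iter t (mulmx A) B = A ^+ t *m B.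
Proof.
elim: t => [|t IH] /=; first by rewrite expr0 -idmxE mul1mx.
by rewrite IH exprS -mulmxE mulmxA.
Qed.

Lemma mulmx_expD (R : pzSemiRingType) m p (A : 'M[R]_m) (B : 'M[R]_(m, p)) s t :
  A ^+ (s + t) *m B = A ^+ s *m (A ^+ t *m B).
Proof. by rewrite exprD -mulmxE mulmxA. Qed.

Section FiniteUnitMatrix.
Variables (R : finComUnitRingType) (m : nat) (A : 'M[R]_m).
Hypothesis A_unit : A \in unitmx.

Lemma mulmx_unit_inj p : injective (mulmx A : 'M[R]_(m, p) -> 'M[R]_(m, p)).
Proof. exact: can_inj (mulKmx A_unit). Qed.

Lemma unitmx_exp_inv t : exists s, A ^+ (t + s) = 1.
Proof.
pose N := order (mulmx A) (1 : 'M[R]_m).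
have AN : A ^+ N = 1.
  by rewrite -[A ^+ N]mulmx1 idmxE -iter_mulmx iter_order //; apply: mulmx_unit_inj.
exists (t * N.-1)%N.
have -> : (t + t * N.-1 = N * t)%N.
  by rewrite [(N * t)%N]mulnC -mulnS prednK // order_gt0.
by rewrite exprM AN expr1n.
Qed.

Lemma mulmx_orbit (v : 'cV[R]_m) : exists2 p, (0 < p)%N &
  A ^+ p *m v = v /\
  forall s t, (s < p)%N -> (t < p)%N -> A ^+ s *m v = A ^+ t *m v -> s = t.
Proof.
exists (order (mulmx A) v); first exact: order_gt0.
split; first by rewrite -iter_mulmx iter_order //; apply: mulmx_unit_inj.
move=> s t sp tp; rewrite -!iter_mulmx => e.
by rewrite -(findex_iter sp) e findex_iter.
Qed.

Lemma mulmx_exp_eq0 (v : 'cV[R]_m) t : (A ^+ t *m v == 0) = (v == 0).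
Proof.
apply/eqP/eqP => [|->]; last exact: mulmx0.
rewrite -iter_mulmx; elim: t => [|t IH] //= e; apply: IH.
by apply: (@mulmx_unit_inj 1); rewrite e mulmx0.
Qed.

End FiniteUnitMatrix.

Definition partner_nat (j : nat) : nat := if odd j then j.-1 else j.+1.

Lemma partner_natK : involutive partner_nat.
Proof. by move=> [|j] //; rewrite /partner_nat /=; case hj: (odd j); rewrite /= ?hj. Qed.

Lemma partner_nat_half j : (partner_nat j %/ 2 = j %/ 2)%N.
Proof. by rewrite /partner_nat; have := modn2 j; case: (odd j) => /= ?; lia. Qed.

Lemma partner_natE i j : ((i %/ 2 == j %/ 2)%N && (i != j)) = (j == partner_nat i).
Proof.
rewrite /partner_nat; have := modn2 i; case: (odd i) => /= hi.
all: by apply/idP/eqP => [/andP[/eqP ? /eqP ?]|->]; [|apply/andP; split; apply/eqP]; lia.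
Qed.

Lemma partner_lt n (j : 'I_(2 * n)) : (partner_nat j < 2 * n)%N.
Proof.
by rewrite /partner_nat; have := ltn_ord j; have := modn2 j; case: (odd j) => /= ? ?; lia.
Qed.

Definition partner n (j : 'I_(2 * n)) : 'I_(2 * n) := Ordinal (partner_lt j).

Lemma partnerK n : involutive (@partner n).
Proof. by move=> j; apply: val_inj; rewrite /= partner_natK. Qed.

Lemma partner_half n (j : 'I_(2 * n)) : (partner j %/ 2 = j %/ 2)%N.
Proof. exact: partner_nat_half. Qed.

Lemma symJE n (i j : 'I_(2 * n)) : symJ n i j = (j == partner i)%:R.
Proof. by rewrite mxE -!val_eqE partner_natE. Qed.

Lemma symJ2 n : symJ n *m symJ n = 1%:M.
Proof.
apply/matrixP => i j; rewrite !mxE.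
under eq_bigr => l _ do rewrite !symJE.
by rewrite sum_kronecker partnerK eq_sym.
Qed.

Section Symplectic.
Variables (n : nat) (W : F2mat n).
Hypothesis W_sympl : symplectic W.

Let W_rinv : W *m (symJ n *m W^T *m symJ n) = 1%:M.
Proof. by rewrite !mulmxA W_sympl symJ2. Qed.

Lemma symplectic_unitmx : W \in unitmx.
Proof. by case: (mulmx1_unit W_rinv). Qed.

Lemma symplectic_trmx : W^T *m symJ n *m W = symJ n.
Proof.
have := congr1 (mulmx (symJ n)) (mulmx1C W_rinv).
by rewrite mulmx1 !mulmxA symJ2 mul1mx.
Qed.

End Symplectic.

Definition sform n (u v : F2vec n) : 'F_2 := (u^T *m symJ n *m v) 0 0.

Section SymplecticForm.
Variable n : nat.
Implicit Types (u v w : F2vec n).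

Lemma sformE u v : sform u v = \sum_j u j 0 * v (partner j) 0.
Proof.
rewrite /sform mxE.
under eq_bigr => l _ do rewrite mxE big_distrl /=.
rewrite exchange_big /=; apply: eq_bigr => j _.
under eq_bigr => l _ do rewrite mxE symJE -mulrA.
by rewrite -big_distrr /= sum_kronecker.
Qed.

Lemma sform_linearl c u v w : sform (c *: u + v) w = c * sform u w + sform v w.
Proof.
rewrite !sformE big_distrr -big_split; apply: eq_bigr => j _.
by rewrite !mxE mulrDl -mulrA.
Qed.

Lemma sformBr u v w : sform w (u - v) = sform w u - sform w v.
Proof.
by rewrite !sformE -sumrB; apply: eq_bigr => j _; rewrite !mxE mulrBr.
Qed.

Lemma sform_delta u (j : 'I_(2 * n)) : sform u (delta_mx j 0) = u (partner j) 0.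
Proof.
rewrite sformE -(sum_kronecker (partner j) (fun l => u l 0)).
by apply: eq_bigr => l _; rewrite mxE andbT (can2_eq (@partnerK n) (@partnerK n)) mulrC.
Qed.

Lemma sform_exp_symplectic (W : F2mat n) t u v : symplectic W ->
  sform (W ^+ t *m u) (W ^+ t *m v) = sform u v.
Proof.
move=> /symplectic_trmx WJW; elim: t => [|t IH]; first by rewrite expr0 -idmxE !mul1mx.
rewrite exprS -!mulmxE -!mulmxA -IH /sform; congr (_ 0 0).
by rewrite trmx_mul -!mulmxA (mulmxA W^T) (mulmxA _ W) WJW.
Qed.

End SymplecticForm.

Definition projS n (S : pred nat) (v : F2vec n) : F2vec n :=
  \col_j (if S (j %/ 2)%N then v j 0 else 0).

Section Support.
Variable n : nat.
Implicit Types (u v : F2vec n) (S : pred nat).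

Lemma supported_linear S c u v :
  supported S u -> supported S v -> supported S (c *: u + v).
Proof. by move=> hu hv j hj; rewrite !mxE hu // hv // mulr0 addr0. Qed.

Lemma supportedB S u v : supported S u -> supported S v -> supported S (u - v).
Proof. by move=> hu hv j hj; rewrite !mxE hu // hv // subr0. Qed.

Lemma supported_sub S S' u :
  (forall s, S s -> S' s) -> supported S u -> supported S' u.
Proof. by move=> SS' hu j hj; apply: hu; apply: contra hj; apply: SS'. Qed.

Lemma projCE a k v : projC a k v = projS (siteC a k) v.
Proof. by []. Qed.

Lemma supported_projS S v : supported S (projS S v).
Proof. by move=> j hj; rewrite mxE (negbTE hj). Qed.

Lemma sform_projS S u v : sform (projS S u) v = sform u (projS S v).
Proof.
rewrite !sformE; apply: eq_bigr => j _; rewrite !mxE partner_half.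
by case: (S _); rewrite ?mul0r ?mulr0.
Qed.

Lemma sform_disjoint S S' u v : (forall s, S s -> S' s -> False) ->
  supported S u -> supported S' v -> sform u v = 0.
Proof.
move=> SS' hu hv; rewrite sformE big1 // => j _.
case hj: (S (j %/ 2)%N); last by rewrite hu ?hj ?mul0r.
by rewrite hv ?mulr0 // partner_half; apply/negP; apply: SS' hj.
Qed.

Lemma in_span_ind (P Q : F2vec n -> Prop) : Q 0 ->
  (forall c u v, Q u -> Q v -> Q (c *: u + v)) -> (forall v, P v -> Q v) ->
  forall x, in_span P x -> Q x.
Proof.
move=> Q0 Qlin PQ x [s [Ps ->]]; elim: s Ps => [|[c v] s IH] Ps; first by rewrite big_nil.
rewrite big_cons; apply: Qlin; first by apply: PQ (Ps (c, v) (mem_head _ _)).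
by apply: IH => q qs; apply: Ps; rewrite inE qs orbT.
Qed.

End Support.

Section LeftWall.
Variables (n a k : nat) (W : F2mat n).
Hypotheses (W_sympl : symplectic W) (W_wall : left_wall a k W).

Local Notation siteLC := (fun s => siteL a s || siteC a k s).

Lemma left_wall_exp t (l : F2vec n) :
  supported (siteL a) l -> supported siteLC (W ^+ t *m l).
Proof.
case: t => [|t] hl; last exact: W_wall.
by rewrite expr0 -idmxE mul1mx; apply: supported_sub hl => s ->.
Qed.

Lemma projSC_LC (v : F2vec n) :
  supported siteLC v -> projS (siteC a k) v = v - projS (siteL a) v.
Proof.
move=> hv; apply/matrixP => j z; rewrite ord1 !mxE.
have := hv j; rewrite /siteC /siteL; set s := (j %/ 2)%N => vj.
have [sL|sL] /= := ltnP s a; first by rewrite subrr.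
by rewrite subr0; have [|sC] := ltnP s (a + k); rewrite // vj //; lia.
Qed.

Lemma sform_right_left s t (r l : F2vec n) : supported (siteR a k) r ->
  supported (siteL a) l -> sform (W ^+ s *m r) (W ^+ t *m l) = 0.
Proof.
move=> hr hl; have [s' Ws] := unitmx_exp_inv (symplectic_unitmx W_sympl) s.
have -> : W ^+ t *m l = W ^+ s *m (W ^+ (s' + t) *m l).
  by rewrite -mulmx_expD addnA mulmx_expD Ws -idmxE mul1mx.
rewrite sform_exp_symplectic //; apply: sform_disjoint hr (left_wall_exp _ hl).
by move=> x; rewrite /siteR /siteL /siteC => ? /orP[|/andP[]]; lia.
Qed.

Lemma G_left_orbit (g : F2vec n) t : G_left a k W g -> supported siteLC (W ^+ t *m g).
Proof.
move=> [x [xspan ->]].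
pose Q v := forall t, supported siteLC (W ^+ t *m v).
have Qx : Q x.
  apply: (in_span_ind _ _ _ xspan) => [t'|c u v Qu Qv t'|_ [s [l [hl ->]]] t'].
  - by rewrite mulmx0 => j _; rewrite mxE.
  - by rewrite mulmxDr -scalemxAr; apply: supported_linear.
  - by rewrite -mulmx_expD; apply: left_wall_exp.
rewrite projCE projSC_LC ?mulmxBr; last by have := Qx 0%N; rewrite expr0 -idmxE mul1mx.
by apply: supportedB; [apply: Qx | exact (left_wall_exp t (supported_projS x))].
Qed.

Lemma G_right_orth (g : F2vec n) s (l : F2vec n) : G_right a k W g ->
  supported (siteL a) l -> sform g (W ^+ s *m l) = 0.
Proof.
move=> [y [yspan ->]] hl.
pose Q v := forall s l, supported (siteL a) l -> sform v (W ^+ s *m l) = 0.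
have Qy : Q y.
  apply: (in_span_ind _ _ _ yspan)
    => [s' l' _|c u v Qu Qv s' l' hl'|_ [t [r [hr ->]]] s' l' hl'].
  - by rewrite sformE big1 // => j _; rewrite mxE mul0r.
  - by rewrite sform_linearl Qu // Qv // mulr0 addr0.
  - exact: sform_right_left.
have WlLC := left_wall_exp s hl.
have QyL : sform y (projS (siteL a) (W ^+ s *m l)) = 0.
  have := Qy 0%N _ (supported_projS (S := siteL a) (W ^+ s *m l)).
  by rewrite expr0 -idmxE mul1mx.
by rewrite projCE sform_projS projSC_LC // sformBr Qy // QyL subrr.
Qed.

Lemma G_left_right_orbit (g : F2vec n) t : G_left a k W g -> G_right a k W g ->
  supported (siteC a k) (W ^+ t *m g).
Proof.
move=> gL gR j hj; case jL: (siteL a (j %/ 2)%N); last first.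
  by apply: (G_left_orbit t gL); rewrite jL (negbTE hj).
have [s Wt] := unitmx_exp_inv (symplectic_unitmx W_sympl) t.
pose d : F2vec n := delta_mx (partner j) 0.
have dL : supported (siteL a) d.
  move=> i iL; rewrite mxE eqxx andbT; case: eqP => // ei.
  by move: iL; rewrite ei partner_half jL.
have dW : d = W ^+ t *m (W ^+ s *m d) by rewrite -mulmx_expD Wt -idmxE mul1mx.
by rewrite -[j]partnerK -sform_delta -/d dW sform_exp_symplectic // G_right_orth.
Qed.

End LeftWall.

Section Operators.
Variables (R : rcfType) (m : nat).
Implicit Types (A B D U : op R m).

Lemma op_ext A B : (forall x y, A x y = B x y) -> A = B.
Proof. by move=> AB; apply/boolp.funext => x; apply/boolp.funext => y; apply: AB. Qed.

Lemma op_mulA A B D : op_mul (op_mul A B) D = op_mul A (op_mul B D).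
Proof.
apply: op_ext => x y; rewrite /op_mul.
under eq_bigr => z _ do rewrite big_distrl /=.
rewrite exchange_big /=; apply: eq_bigr => w _.
by rewrite big_distrr /=; apply: eq_bigr => z _; rewrite mulrA.
Qed.

Lemma op_mul1l A : op_mul (op_id R m) A = A.
Proof.
apply: op_ext => x y; rewrite /op_mul /op_id.
by under eq_bigr => z _ do rewrite eq_sym; rewrite sum_kronecker.
Qed.

Lemma op_mul1r A : op_mul A (op_id R m) = A.
Proof.
apply: op_ext => x y; rewrite /op_mul /op_id.
by under eq_bigr => z _ do rewrite mulrC; rewrite sum_kronecker.
Qed.

Lemma op_adjM A B : op_adj (op_mul A B) = op_mul (op_adj B) (op_adj A).
Proof.
apply: op_ext => x y; rewrite /op_adj /op_mul rmorph_sum.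
by apply: eq_bigr => z _; rewrite rmorphM mulrC.
Qed.

Lemma op_adjK A : op_adj (op_adj A) = A.
Proof. by apply: op_ext => x y; rewrite /op_adj conjCK. Qed.

Definition op_tr A : R[i] := \sum_x A x x.

Lemma op_trC A B : op_tr (op_mul A B) = op_tr (op_mul B A).
Proof.
rewrite /op_tr /op_mul exchange_big /=; apply: eq_bigr => x _.
by apply: eq_bigr => y _; rewrite mulrC.
Qed.

Definition hsdot A B : R[i] := \sum_x \sum_y (A x y)^* * B x y.

Lemma hsdot_tr A B : hsdot A B = op_tr (op_mul (op_adj A) B).
Proof. by rewrite /hsdot /op_tr /op_mul /op_adj exchange_big. Qed.

Lemma hsdot_conj_unitary U A B : unitary U ->
  hsdot (op_mul (op_mul U A) (op_adj U)) (op_mul (op_mul U B) (op_adj U)) = hsdot A B.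
Proof.
move=> [_ UU]; rewrite !hsdot_tr !op_adjM op_adjK !op_mulA.
by rewrite -(op_mulA (op_adj U) U) UU op_mul1l op_trC !op_mulA UU op_mul1r.
Qed.

Lemma hsdot_scalel c A B : hsdot (op_scale c A) B = c^* * hsdot A B.
Proof.
rewrite /hsdot /op_scale big_distrr; apply: eq_bigr => x _.
by rewrite big_distrr; apply: eq_bigr => y _; rewrite rmorphM -mulrA.
Qed.

Lemma hsdot_scaler c A B : hsdot A (op_scale c B) = c * hsdot A B.
Proof.
rewrite /hsdot /op_scale big_distrr; apply: eq_bigr => x _.
by rewrite big_distrr; apply: eq_bigr => y _; rewrite mulrCA.
Qed.

Definition opsum p (F : 'I_p -> op R m) : op R m := fun x y => \sum_t F t x y.

Lemma op_mul_suml p (F : 'I_p -> op R m) B :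
  op_mul (opsum F) B = opsum (fun t => op_mul (F t) B).
Proof.
apply: op_ext => x y; rewrite /op_mul /opsum.
by under eq_bigr => z _ do rewrite big_distrl /=; rewrite exchange_big.
Qed.

Lemma op_mul_sumr p (F : 'I_p -> op R m) A :
  op_mul A (opsum F) = opsum (fun t => op_mul A (F t)).
Proof.
apply: op_ext => x y; rewrite /op_mul /opsum.
by under eq_bigr => z _ do rewrite big_distrr /=; rewrite exchange_big.
Qed.

Lemma op_mul_scalel c A B : op_mul (op_scale c A) B = op_scale c (op_mul A B).
Proof.
apply: op_ext => x y; rewrite /op_mul /op_scale big_distrr /=.
by apply: eq_bigr => z _; rewrite mulrA.
Qed.

Lemma op_mul_scaler c A B : op_mul A (op_scale c B) = op_scale c (op_mul A B).
Proof.
apply: op_ext => x y; rewrite /op_mul /op_scale big_distrr /=.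
by apply: eq_bigr => z _; rewrite mulrCA.
Qed.

Lemma hsdot_sumr p (F : 'I_p -> op R m) A : hsdot A (opsum F) = \sum_t hsdot A (F t).
Proof.
rewrite /hsdot /opsum.
under eq_bigr => x _ do under eq_bigr => y _ do rewrite big_distrr /=.
by under eq_bigr => x _ do rewrite exchange_big /=; rewrite exchange_big.
Qed.

End Operators.

Lemma site_index m (j : 'I_(2 * m)) : exists i : 'I_m, j = pidx i \/ j = qidx i.
Proof.
have jm : (j %/ 2 < m)%N by have := ltn_ord j; lia.
exists (Ordinal jm); have := modn2 j.
by case: (odd j) => /= ?; [right|left]; apply: val_inj => /=; lia.
Qed.

Lemma F2_neq0_eq (x y : 'F_2) : ((x != 0) == (y != 0)) = (x == y).
Proof. by case: x => [[|[|?]] ?]; case: y => [[|[|?]] ?]. Qed.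

Section Pauli.
Variable R : rcfType.

Definition pauli1 (p q x y : bool) : R[i] := (x == y (+) p)%:R * (-1) ^+ (q && y).

Definition xbit m (b : F2vec m) (i : 'I_m) : bool := b (pidx i) 0 != 0.
Definition zbit m (b : F2vec m) (i : 'I_m) : bool := b (qidx i) 0 != 0.

Lemma pauliE m (b : F2vec m) x y :
  pauli R b x y = \prod_i pauli1 (xbit b i) (zbit b i) (x i) (y i).
Proof. by []. Qed.

Lemma pauli1_conj p q x y : (pauli1 p q x y)^* = pauli1 p q x y.
Proof. by rewrite /pauli1 rmorphM rmorph_nat rmorphXn rmorphN1. Qed.

Lemma hsdot_pauli1 p q p' q' :
  \sum_x \sum_y pauli1 p q x y * pauli1 p' q' x y = ((p == p') && (q == q'))%:R * 2.
Proof.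
rewrite /pauli1.
by case: p; case: q; case: p'; case: q'; rewrite !big_bool /= ?expr0 ?expr1; ring.
Qed.

Lemma hsdot_pauli_prod m (u w : F2vec m) : hsdot (pauli R u) (pauli R w) =
  \prod_i (((xbit u i == xbit w i) && (zbit u i == zbit w i))%:R * 2).
Proof.
rewrite (eq_bigr (fun i => \sum_a \sum_c
  pauli1 (xbit u i) (zbit u i) a c * pauli1 (xbit w i) (zbit w i) a c)); last first.
  by move=> i _; rewrite hsdot_pauli1.
rewrite bigA_distr_bigA; apply: eq_bigr => x _; rewrite bigA_distr_bigA.
apply: eq_bigr => y _; rewrite !pauliE rmorph_prod -big_split.
by apply: eq_bigr => i _; rewrite /= pauli1_conj.
Qed.

Lemma hsdot_pauli m (u w : F2vec m) :
  hsdot (pauli R u) (pauli R w) = (u == w)%:R * 2 ^+ m.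
Proof.
rewrite hsdot_pauli_prod; case: eqVneq => [<-|uw].
  by under eq_bigr => i _ do rewrite !eqxx mul1r; rewrite prodr_const card_ord mul1r.
have [j uwj] : exists j, u j 0 != w j 0.
  apply/existsP; apply: contraR uw => /existsPn uw.
  by apply/eqP/matrixP => j z; rewrite ord1; apply/eqP; move: (uw j); rewrite negbK.
have [i ji] := site_index j.
rewrite mul0r (bigD1 i) //= /xbit /zbit !F2_neq0_eq.
by case: ji => <-; rewrite (negbTE uwj) ?andbF /= !mul0r.
Qed.

Lemma pauli0 m : pauli R (0 : F2vec m) = op_id R m.
Proof.
apply: op_ext => x y; rewrite pauliE /op_id /xbit /zbit.
under eq_bigr => i _ do rewrite !mxE eqxx /= /pauli1 addbF expr0 mulr1.
case: eqVneq => [<-|xy]; first by rewrite big1 // => i _; rewrite eqxx.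
have [i xyi] : exists i, x i != y i.
  apply/existsP; apply: contraR xy => /existsPn xy.
  by apply/eqP/ffunP => i; move: (xy i); rewrite negbK => /eqP.
by rewrite (bigD1 i) //= (negbTE xyi) mul0r.
Qed.

Definition pauli_comb m p (beta : nat -> R[i]) (v : nat -> F2vec m) : op R m :=
  opsum (fun t : 'I_p => op_scale (beta t) (pauli R (v t))).

Lemma hsdot_pauli_comb m p beta (v : nat -> F2vec m) u :
  hsdot (pauli R u) (pauli_comb p beta v) = \sum_(t < p) beta t * (u == v t)%:R * 2 ^+ m.
Proof.
by rewrite hsdot_sumr; apply: eq_bigr => t _; rewrite hsdot_scaler hsdot_pauli mulrA.
Qed.

Lemma two_exp_neq0 m : (2 ^+ m : R[i]) != 0.
Proof. by rewrite expf_eq0 pnatr_eq0 andbF. Qed.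

Lemma pauli_comb_not_scalar m p beta (v : nat -> F2vec m) :
  (0 < p)%N -> beta 0%N != 0 -> (forall t, v t != 0) ->
  (forall t, (t < p)%N -> v t = v 0%N -> t = 0%N) ->
  ~ exists c, pauli_comb p beta v = op_scale c (op_id R m).
Proof.
move=> p0 beta0 v0 vinj [c Q].
have hsdot_id u : hsdot (pauli R u) (op_id R m) = (u == 0)%:R * 2 ^+ m.
  by rewrite -(pauli0 m) hsdot_pauli.
have c0 : c = 0.
  have := hsdot_pauli_comb p beta v 0; rewrite Q hsdot_scaler hsdot_id eqxx mul1r.
  rewrite big1 => [/eqP|t _]; last by rewrite eq_sym (negbTE (v0 t)) mulr0 mul0r.
  by rewrite mulf_eq0 (negbTE (two_exp_neq0 m)) orbF => /eqP.
have := hsdot_pauli_comb p beta v (v 0%N).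
rewrite Q c0 hsdot_scaler mul0r (bigD1 (Ordinal p0)) //= eqxx mulr1 big1 ?addr0.
  by move/eqP; rewrite eq_sym mulf_eq0 (negbTE beta0) (negbTE (two_exp_neq0 m)).
move=> t t0; case: eqP => [e|]; last by rewrite mulr0 mul0r.
by case/eqP: t0; apply: val_inj; rewrite /= (vinj t) ?ltn_ord.
Qed.

End Pauli.

Section EmbedC.
Variables (R : rcfType) (a k r : nat).

Lemma prod_siteC (G : 'I_(a + k + r) -> R[i]) :
  \prod_(s < a + k + r | siteC a k s) G s = \prod_(j < k) G (csite a k r j).
Proof.
rewrite big_split_ord /= [X in _ * X]big_pred0 ?mulr1; last first.
  by move=> s /=; rewrite /siteC /= ltnNge leq_addr andbF.
rewrite big_split_ord /= big_pred0 ?mul1r; last first.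
  by move=> s /=; rewrite /siteC /= leqNgt ltn_ord.
by apply: eq_bigl => j; rewrite /siteC /= leq_addr ltn_add2l ltn_ord.
Qed.

Lemma idxC_lt (j : 'I_(2 * k)) : (2 * a + j < 2 * (a + k + r))%N.
Proof. by have := ltn_ord j; lia. Qed.

Definition idxC (j : 'I_(2 * k)) : 'I_(2 * (a + k + r)) := Ordinal (idxC_lt j).

Definition blockC (w : F2vec (a + k + r)) : F2vec k := \col_j w (idxC j) 0.

Lemma idxC_pidx (j : 'I_k) : idxC (pidx j) = pidx (csite a k r j).
Proof. by apply: val_inj => /=; lia. Qed.

Lemma idxC_qidx (j : 'I_k) : idxC (qidx j) = qidx (csite a k r j).
Proof. by apply: val_inj => /=; lia. Qed.

Lemma embedC_pauli (w : F2vec (a + k + r)) :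
  supported (siteC a k) w -> embedC R a k r (pauli R (blockC w)) = pauli R w.
Proof.
move=> wC; apply: op_ext => x y.
rewrite [RHS]pauliE (bigID (fun s : 'I_(a + k + r) => siteC a k s)) /=.
rewrite prod_siteC; congr (_ * _).
  by apply: eq_bigr => j _; rewrite /xbit /zbit !mxE idxC_pidx idxC_qidx !ffunE.
apply: eq_bigr => s sC.
have [-> ->] : xbit w s = false /\ zbit w s = false.
  by rewrite /xbit /zbit !wC ?eqxx //= (_ : (_ %/ 2 = s)%N) //; lia.
by rewrite /pauli1 addbF expr0 mulr1.
Qed.

Lemma embedC_pauli_comb p beta (v : nat -> F2vec (a + k + r)) :
  (forall t, supported (siteC a k) (v t)) ->
  embedC R a k r (pauli_comb p beta (fun t => blockC (v t))) = pauli_comb p beta v.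
Proof.
move=> vC; apply: op_ext => x y; rewrite /embedC /pauli_comb /opsum /op_scale big_distrl /=.
by apply: eq_bigr => t _; rewrite -mulrA -(embedC_pauli (vC t)).
Qed.

Lemma blockC_inj (u w : F2vec (a + k + r)) : supported (siteC a k) u ->
  supported (siteC a k) w -> blockC u = blockC w -> u = w.
Proof.
move=> uC wC uw; apply/matrixP => j z; rewrite ord1.
case jC: (siteC a k (j %/ 2)%N); last by rewrite uC ?wC ?jC.
have jk : (j - 2 * a < 2 * k)%N by move: jC; rewrite /siteC; lia.
have <- : idxC (Ordinal jk) = j by apply: val_inj => /=; move: jC; rewrite /siteC; lia.
by have := congr1 (fun b : F2vec k => b (Ordinal jk) 0) uw; rewrite !mxE.
Qed.

Lemma blockC_eq0 (w : F2vec (a + k + r)) :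
  supported (siteC a k) w -> (blockC w == 0) = (w == 0).
Proof.
move=> wC; apply/eqP/eqP => [w0|->]; last by apply/matrixP => j z; rewrite !mxE.
apply: blockC_inj wC _ _; first by move=> j _; rewrite mxE.
by rewrite w0; apply/matrixP => j z; rewrite !mxE.
Qed.

End EmbedC.

Lemma expi_onto (R : realType) (z : R[i]) : z^* * z = 1 -> exists theta : R, expi theta = z.
Proof.
case: z => x y [/= xy _].
have x2y2 : x ^+ 2 + y ^+ 2 = 1 by rewrite -xy; ring.
have x1 : x \in `[-1, 1] by rewrite in_itv /=; apply/andP; split; nra.
have sin_acos_x : sin (acos x) = `|y|.
  by rewrite sin_acos // (_ : 1 - x ^+ 2 = y ^+ 2) ?sqrtr_sqr //; lra.
case: (lerP 0 y) => y0.
  by exists (acos x); rewrite /expi acosK // sin_acos_x ger0_norm.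
by exists (- acos x); rewrite /expi cosN sinN acosK // sin_acos_x ltr0_norm // opprK.
Qed.

Lemma sum_shift_periodic (V : nmodType) p (F : nat -> V) :
  F p = F 0%N -> \sum_(t < p) F t.+1 = \sum_(t < p) F t.
Proof.
case: p => [|p] Fp; first by rewrite !big_ord0.
by rewrite big_ord_recr big_ord_recl /= Fp addrC.
Qed.

Section OrbitOperator.
Variables (R : rcfType) (m : nat) (U : op R m) (W : F2mat m).
Hypotheses (U_unitary : unitary U) (U_induces : induces U W).

Definition conj_coef (b : F2vec m) : R[i] :=
  hsdot (pauli R (W *m b)) (op_mul (op_mul U (pauli R b)) (op_adj U)) / 2 ^+ m.

Lemma conj_pauli b :
  op_mul (op_mul U (pauli R b)) (op_adj U) = op_scale (conj_coef b) (pauli R (W *m b)).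
Proof.
have [c Ub] := U_induces b.
by rewrite /conj_coef Ub hsdot_scaler hsdot_pauli eqxx mul1r mulfK ?two_exp_neq0.
Qed.

Lemma conj_coef_unit b : (conj_coef b)^* * conj_coef b = 1.
Proof.
have := hsdot_conj_unitary (pauli R b) (pauli R b) U_unitary.
rewrite conj_pauli hsdot_scalel hsdot_scaler !hsdot_pauli !eqxx !mul1r mulrA.
by rewrite -[RHS]mul1r => /(mulIf (two_exp_neq0 R m)).
Qed.

Variables (g : F2vec m) (p : nat).
Hypotheses (p_gt0 : (0 < p)%N) (g_period : W ^+ p *m g = g).

Local Notation orbit t := (W ^+ t *m g).
Local Notation coef t := (conj_coef (orbit t)).

(* Any [p]-th root of the product of the phases along the orbit makes
   [orbit_weight] [p]-periodic. *)
Definition orbit_phase : R[i] := p.-root (\prod_(t < p) coef t).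

Definition orbit_weight (t : nat) : R[i] := (\prod_(s < t) coef s) / orbit_phase ^+ t.

Definition orbit_operator : op R m := pauli_comb p orbit_weight (fun t => orbit t).

Lemma orbit_phaseX : orbit_phase ^+ p = \prod_(t < p) coef t.
Proof. exact: rootCK. Qed.

Lemma orbit_phase_unit : orbit_phase^* * orbit_phase = 1.
Proof.
apply/eqP; rewrite -(pexpr_eq1 p_gt0); last by rewrite mulrC mul_conjC_ge0.
rewrite exprMn -rmorphXn orbit_phaseX rmorph_prod -big_split /=.
by rewrite big1 // => t _; apply: conj_coef_unit.
Qed.

Lemma orbit_phase_neq0 : orbit_phase != 0.
Proof. by apply: contra_eq_neq orbit_phase_unit => ->; rewrite mulr0 eq_sym oner_neq0. Qed.

Lemma orbit_weight0 : orbit_weight 0 = 1.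
Proof. by rewrite /orbit_weight big_ord0 expr0 divr1. Qed.

Lemma orbit_weight_period : orbit_weight p = 1.
Proof. by rewrite /orbit_weight -orbit_phaseX divff // expf_neq0 // orbit_phase_neq0. Qed.

Lemma orbit_weightS t : orbit_weight t * coef t = orbit_phase * orbit_weight t.+1.
Proof.
rewrite /orbit_weight big_ord_recr /= exprS.
by field; rewrite expf_neq0 // orbit_phase_neq0.
Qed.

Lemma conj_orbit_operator :
  op_mul (op_mul U orbit_operator) (op_adj U) = op_scale orbit_phase orbit_operator.
Proof.
have orbitS t : W *m orbit t = orbit t.+1 by rewrite -[W in LHS]expr1 -mulmx_expD.
apply: op_ext => x y.
rewrite /orbit_operator /pauli_comb op_mul_sumr op_mul_suml /opsum /op_scale.
under eq_bigr => t _ do rewrite op_mul_scaler op_mul_scalel conj_pauli orbitS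
  /op_scale mulrA orbit_weightS -mulrA.
rewrite -big_distrr /=; congr (_ * _).
apply: (@sum_shift_periodic _ p (fun t => orbit_weight t * pauli R (orbit t) x y)).
by rewrite orbit_weight_period orbit_weight0 g_period expr0 -idmxE mul1mx.
Qed.

End OrbitOperator.

Theorem lemma4 (R : realType) (a k r : nat)
  (ha : (0 < a)%N) (hk : (0 < k)%N) (hr : (0 < r)%N)
  (U : op R (a + k + r)) (W : F2mat (a + k + r))
  (hU : clifford_with U W)
  (hwall : left_wall a k W)
  (hG : exists g : F2vec (a + k + r), g != 0 /\ G_left a k W g /\ G_right a k W g) :
  exists (QC : op R k) (theta : R),
    ~ (exists c : R[i], QC = op_scale c (op_id R k)) /\
    op_mul (op_mul U (embedC R a k r QC)) (op_adj U) = op_scale (expi theta) (embedC R a k r QC).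
Proof.
case: hU => U_unitary [W_sympl U_induces]; case: hG => g [g_neq0 [gL gR]].
have W_unit := symplectic_unitmx W_sympl.
have [p p_gt0 [g_period orbit_inj]] := mulmx_orbit W_unit g.
have orbitC t := G_left_right_orbit W_sympl hwall t gL gR.
have [theta e_theta] := expi_onto (orbit_phase_unit U_unitary U_induces g p_gt0).
pose QC := pauli_comb p (orbit_weight U W g p) (fun t => blockC (W ^+ t *m g)).
exists QC, theta; split.
- apply: (pauli_comb_not_scalar p_gt0) => [|t|t tp].
  + by rewrite orbit_weight0 oner_neq0.
  + by rewrite blockC_eq0 // mulmx_exp_eq0.
  + by move=> /= /(blockC_inj (orbitC t) (orbitC 0%N)) /(orbit_inj _ _ tp p_gt0).
- by rewrite embedC_pauli_comb // e_theta conj_orbit_operator.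
Qed.
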